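(* The structure $\mathbb{Q}_2$ is an extension of $\mathbf{S}(2)$; that is, $p(\mathbb{Q}_2)$ is isomorphic to $\mathbf{S}(2)$.
   Context: $\mathbf{S}(2)$ is the tournament whose vertices are the points of the unit circle of $\mathbb{C}$ with rational argument, with an arc from $x$ to $y$ iff $0<\arg(y/x)<\pi$. $\mathbb{Q}_2=(\mathbb{Q},<,Q_1,Q_2)$ where $<$ is the usual order of the rationals and $(Q_1,Q_2)$ is a partition of $\mathbb{Q}$ into two dense subsets. For a structure $\mathbf{A}=(A,<^{\mathbf{A}},P_1,P_2)$ with $<^{\mathbf{A}}$ a linear order and $(P_1,P_2)$ a partition of $A$, writing $a\sim b$ when $a,b$ lie in the same part, $p(\mathbf{A})$ is the tournament on $A$ with an arc from $a$ to $b$ iff either ($a\sim b$ and $a<^{\mathbf{A}}b$) or ($a\not\sim b$ and $b<^{\mathbf{A}}a$). An extension of a tournament $\mathbf{X}$ is any such $\mathbf{A}$ with $p(\mathbf{A})=\mathbf{X}$ (up to isomorphism). *)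

From Stdlib Require Import Reals QArith Qcanon.
From Coquelicot Require Import Coquelicot.

Open Scope R_scope.

Definition cexp (t : R) : C := (cos t, sin t).

Definition S2_vertex : Type := { z : C | exists q : Qc, z = cexp (Q2R q) }.

Definition S2_arc (x y : S2_vertex) : Prop :=
  exists t : R, 0 < t < PI /\ proj1_sig y = Cmult (proj1_sig x) (cexp t).

(* The tournament p(A) for A = (A, <, P, complement of P):
   arc a -> b iff (a ~ b and a < b) or (a !~ b and b < a). *)
Definition p_arc {A : Type} (lt : A -> A -> Prop) (P : A -> bool) (a b : A) : Prop :=
  (P a = P b /\ lt a b) \/ (P a <> P b /\ lt b a).

Definition tournament_iso {A B : Type} (arcA : A -> A -> Prop) (arcB : B -> B -> Prop) : Prop :=
  exists (f : A -> B) (g : B -> A),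
    (forall a, g (f a) = a) /\ (forall b, f (g b) = b) /\
    (forall a1 a2, arcA a1 a2 <-> arcB (f a1) (f a2)).

Definition dense_in_Q (D : Qc -> bool) : Prop :=
  forall a b : Qc, (a < b)%Qc -> exists c : Qc, D c = true /\ (a < c)%Qc /\ (c < b)%Qc.

(* Send a vertex e^{iθ} of S(2) to the real number tan θ, coloured by the sign of cos θ.
   Both the arc relation of S(2) and the arc relation of p applied to this ordered
   two-coloured set then say that the cross product Re x Im y - Im x Re y is positive.
   Since π is irrational, cos never vanishes at a rational angle and tan is injective on
   rational angles, so S(2) becomes a countable dense linear order without endpoints in
   which both colour classes are dense, exactly like Q_2.  Cantor's back-and-forth
   argument, run so as to respect colours, identifies the two coloured orders, and p
   transports the identification to an isomorphism of tournaments. *)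

From Stdlib Require Reals Lra Lia QArith Qreals.
From mathcomp Require all_boot order ssralg ssrnum ssrint rat.
From mathcomp Require classical_sets reals Rstruct Rstruct_topology.
From mathcomp Require topology normedtype sequences trigo pi_irrational.

Module PiIrrational.
Import Stdlib.Reals.Reals Stdlib.micromega.Lra Stdlib.micromega.Lia.
Local Open Scope R_scope.

Lemma cos_eq0_02 (x : R) : cos x = 0 -> 0 < x < 2 -> x = PI / 2.
Proof.
intros hcos hx. destruct (cos_eq_0_0 x hcos) as [k ->].
pose proof PI2_3_2. pose proof PI_RGT_0.
destruct (Z.lt_trichotomy k 0) as [Hk|[->|Hk]].
- assert (IZR k <= -1) by (apply IZR_le; lia). nra.
- simpl. lra.
- assert (1 <= IZR k) by (apply IZR_le; lia). nra.
Qed.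

Import all_boot order ssralg ssrnum ssrint rat classical_sets reals Rstruct.
Import Rstruct_topology topology normedtype sequences trigo pi_irrational.
Import Order.TTheory GRing.Theory Num.Theory.
Local Open Scope ring_scope.

Lemma RcosE (x : R) : Rtrigo_def.cos x = trigo.cos x.
Proof.
rewrite /Rtrigo_def.cos; case: exist_cos => y.
rewrite /cos_in /infinite_sum => cos_ub.
have cos_cvg : (series (cos_coeff' x : nat -> R^o) @ \oo --> (y : R^o))%classic.
  rewrite /series /= -cvg_shiftS /=; apply/cvgrPdist_lt => /= e /RltP /cos_ub[N Ncos_ub].
  near=> n.
  have nN : (n >= N)%coq_nat by apply/ssrnat.leP; near: n; exact: nbhs_infty_ge.
  move: Ncos_ub => /(_ _ nN) /[!RdistE] /RltP /=.
  rewrite distrC sum_f_R0E; congr (`| _ - _ | < e).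
  apply: eq_bigr => k _; rewrite /cos_coeff' /cos_n RdivE !RpowE factE INRE /Rsqr RmultE.
  have -> : (2 * k)%coq_nat = k.*2 by rewrite -mul2n.
  by rewrite -mul2n exprM expr2 mulrAC.
rewrite -(cvg_lim _ cos_cvg) //; apply: (@cvg_lim R^o) => //; exact: cvg_cos_coeff'.
Unshelve. all: by end_near. Qed.

Lemma IZR2E : IZR 2 = 2 :> R.
Proof. by rewrite -[IZR 2]/(INR 2) INRE. Qed.

Lemma PIE : PI = (trigo.pi : R).
Proof.
have pihalfE : trigo.pi / 2 = Rdiv PI (IZR 2) :> R.
  apply: cos_eq0_02; first exact: etrans (RcosE _) (@cos_pihalf R).
  by split; apply/RltP; rewrite ?IZR2E ?divr_gt0 ?pi_gt0 ?pihalf_lt2.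
have two_neq0 : 2 != 0 :> R by rewrite pnatr_eq0.
by rewrite -(divfK two_neq0 trigo.pi) pihalfE RdivE IZR2E divfK.
Qed.

Lemma IZR_intr (z : Z) : exists n : int, IZR z = n%:~R.
Proof.
case: z => [|p|p]; first by exists 0.
  by exists (Pos.to_nat p)%:Z; rewrite /IZR -INR_IPR INRE.
by exists (- (Pos.to_nat p)%:Z); rewrite mulrNz /IZR -INR_IPR INRE.
Qed.

Lemma PI_irrational (r : QArith_base.Q) : PI <> Q2R r.
Proof.
rewrite PIE /Q2R => piE; apply: (@pi_irrationnal R).
have [a aE] := IZR_intr (QArith_base.Qnum r).
have [b bE] := IZR_intr (Z.pos (QArith_base.Qden r)).
exists (a%:~R / b%:~R) => //.
by rewrite piE aE bE RmultE RinvE fmorph_div !rmorph_int.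
Qed.
End PiIrrational.

From Stdlib Require Import Reals QArith Qcanon.
From Coquelicot Require Import Coquelicot.
From Stdlib Require Import Qreals Lra Lia List ClassicalEpsilon ProofIrrelevance Cantor.

Section ListMax.
Variables (A : Type) (lt : A -> A -> Prop).
Hypothesis lt_trans : forall x y z, lt x y -> lt y z -> lt x z.
Hypothesis lt_total : forall x y, lt x y \/ x = y \/ lt y x.

Lemma list_max_exists (Q : A -> Prop) (l : list A) :
  (exists x, In x l /\ Q x) ->
  exists m, In m l /\ Q m /\ forall x, In x l -> Q x -> lt x m \/ x = m.
Proof.
induction l as [|a l IH]; intros [x [hx Qx]]; [destruct hx|].
destruct (classic (exists y, In y l /\ Q y)) as [E|NE].
- destruct (IH E) as [m [lm [Qm hm]]].
  destruct (classic (Q a /\ lt m a)) as [[Qa ma]|nam].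
  + exists a. split; [left; reflexivity|]. split; [exact Qa|].
    intros y [<-|hy] Qy; [right; reflexivity|].
    left. destruct (hm y hy Qy) as [ym| ->]; [exact (lt_trans _ _ _ ym ma)| exact ma].
  + exists m. split; [right; exact lm|]. split; [exact Qm|].
    intros y [<-|hy] Qy; [|exact (hm y hy Qy)].
    destruct (lt_total a m) as [h|[h|h]]; [left; exact h|right; exact h|].
    exfalso. exact (nam (conj Qy h)).
- exists a. split; [left; reflexivity|].
  assert (Qa : Q a) by (destruct hx as [<-|hx]; [exact Qx|exfalso; eauto]).
  split; [exact Qa|].
  intros y [<-|hy] Qy; [right; reflexivity| exfalso; eauto].
Qed.

End ListMax.

Lemma list_min_exists (A : Type) (lt : A -> A -> Prop)
  (lt_trans : forall x y z, lt x y -> lt y z -> lt x z)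
  (lt_total : forall x y, lt x y \/ x = y \/ lt y x) (Q : A -> Prop) (l : list A) :
  (exists x, In x l /\ Q x) ->
  exists m, In m l /\ Q m /\ forall x, In x l -> Q x -> lt m x \/ x = m.
Proof.
apply (list_max_exists A (fun x y => lt y x)); [eauto|].
intros x y. destruct (lt_total x y) as [h|[h|h]]; auto.
Qed.

Record dense_coloured_order := {
  dco_car :> Type;
  dco_lt : dco_car -> dco_car -> Prop;
  dco_col : dco_car -> bool;
  dco_enum : nat -> dco_car;
  dco_enum_surj : forall x, exists n, dco_enum n = x;
  dco_lt_irrefl : forall x, ~ dco_lt x x;
  dco_lt_trans : forall x y z, dco_lt x y -> dco_lt y z -> dco_lt x z;
  dco_lt_total : forall x y, dco_lt x y \/ x = y \/ dco_lt y x;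
  dco_dense : forall c x y, dco_lt x y -> exists z, dco_col z = c /\ dco_lt x z /\ dco_lt z y;
  dco_no_max : forall c x, exists z, dco_col z = c /\ dco_lt x z;
  dco_no_min : forall c x, exists z, dco_col z = c /\ dco_lt z x }.

Arguments dco_lt {_} _ _.
Arguments dco_col {_} _.

Section DenseColouredOrder.
Variable T : dense_coloured_order.

Lemma dco_lt_asym (x y : T) : dco_lt x y -> ~ dco_lt y x.
Proof. intros h1 h2. exact (dco_lt_irrefl T x (dco_lt_trans T _ _ _ h1 h2)). Qed.

Lemma dco_exists_between (l : list T) (Lo Hi : T -> Prop) (c : bool) :
  (forall x y, In x l -> In y l -> Lo x -> Hi y -> dco_lt x y) ->
  exists b, dco_col b = c /\
    (forall x, In x l -> Lo x -> dco_lt x b) /\ (forall x, In x l -> Hi x -> dco_lt b x).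
Proof.
intros LoHi.
assert (below_max : forall m b, (forall x, In x l -> Lo x -> dco_lt x m \/ x = m) ->
          dco_lt m b -> forall x, In x l -> Lo x -> dco_lt x b).
{ intros m b hm mb x hx Lx. destruct (hm x hx Lx) as [xm| ->]; [|exact mb].
  exact (dco_lt_trans T _ _ _ xm mb). }
assert (above_min : forall M b, (forall x, In x l -> Hi x -> dco_lt M x \/ x = M) ->
          dco_lt b M -> forall x, In x l -> Hi x -> dco_lt b x).
{ intros M b hM bM x hx Hx. destruct (hM x hx Hx) as [Mx| ->]; [|exact bM].
  exact (dco_lt_trans T _ _ _ bM Mx). }
assert (none : forall P : T -> Prop, ~ (exists x, In x l /\ P x) ->
          forall b x, In x l -> P x -> dco_lt b x /\ dco_lt x b).
{ intros P NP b x hx Px. exfalso. exact (NP (ex_intro _ x (conj hx Px))). }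
pose proof (list_max_exists T dco_lt (dco_lt_trans T) (dco_lt_total T) Lo l) as max_Lo.
pose proof (list_min_exists T dco_lt (dco_lt_trans T) (dco_lt_total T) Hi l) as min_Hi.
destruct (classic (exists x, In x l /\ Lo x)) as [EL|NL];
destruct (classic (exists x, In x l /\ Hi x)) as [EH|NH].
- destruct (max_Lo EL) as [m [lm [Lm hm]]]. destruct (min_Hi EH) as [M [lM [HM hM]]].
  destruct (dco_dense T c m M (LoHi m M lm lM Lm HM)) as [b [bc [mb bM]]].
  exists b. split; [exact bc|]. split; [exact (below_max m b hm mb)| exact (above_min M b hM bM)].
- destruct (max_Lo EL) as [m [lm [Lm hm]]]. destruct (dco_no_max T c m) as [b [bc mb]].
  exists b. split; [exact bc|]. split; [exact (below_max m b hm mb)|].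
  intros x hx Hx. exact (proj1 (none Hi NH b x hx Hx)).
- destruct (min_Hi EH) as [M [lM [HM hM]]]. destruct (dco_no_min T c M) as [b [bc bM]].
  exists b. split; [exact bc|]. split; [|exact (above_min M b hM bM)].
  intros x hx Lx. exact (proj2 (none Lo NL b x hx Lx)).
- destruct (dco_no_max T c (dco_enum T 0)) as [b [bc _]].
  exists b. split; [exact bc|]. split.
  + intros x hx Lx. exact (proj2 (none Lo NL b x hx Lx)).
  + intros x hx Hx. exact (proj1 (none Hi NH b x hx Hx)).
Qed.

End DenseColouredOrder.

Definition swap_pairs {A B : Type} (l : list (A * B)) : list (B * A) :=
  map (fun p => (snd p, fst p)) l.

Lemma swap_pairsK {A B : Type} (l : list (A * B)) : swap_pairs (swap_pairs l) = l.
Proof.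
unfold swap_pairs. rewrite map_map. rewrite <- map_id.
apply map_ext. intros [a b]. reflexivity.
Qed.

Lemma in_swap_pairs {A B : Type} (l : list (A * B)) (a : A) (b : B) :
  In (b, a) (swap_pairs l) <-> In (a, b) l.
Proof.
unfold swap_pairs. rewrite in_map_iff. split.
- intros [[x y] [e h]]. injection e as -> ->. exact h.
- intros h. exists (a, b). split; [reflexivity|exact h].
Qed.

Definition partial_iso (S T : dense_coloured_order) (l : list (S * T)) : Prop :=
  forall p q, In p l -> In q l ->
    (dco_lt (fst p) (fst q) <-> dco_lt (snd p) (snd q)) /\ dco_col (fst p) = dco_col (snd p).

Lemma partial_iso_swap (S T : dense_coloured_order) (l : list (S * T)) :
  partial_iso S T l -> partial_iso T S (swap_pairs l).
Proof.
intros iso [b1 a1] [b2 a2] h1 h2.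
rewrite in_swap_pairs in h1, h2.
destruct (iso _ _ h1 h2) as [e c]. split; [exact (iff_sym e)|exact (eq_sym c)].
Qed.

Lemma partial_iso_extend (S T : dense_coloured_order) (l : list (S * T)) (a : S) :
  partial_iso S T l -> exists b, partial_iso S T ((a, b) :: l).
Proof.
intros iso.
destruct (classic (exists b, In (a, b) l)) as [[b hb]|fresh].
{ exists b. intros p q hp hq. apply iso; [destruct hp as [<-|hp]|destruct hq as [<-|hq]]; assumption. }
destruct (dco_exists_between T (map snd l) (fun y => exists x, In (x, y) l /\ dco_lt x a)
            (fun y => exists x, In (x, y) l /\ dco_lt a x) (dco_col a)) as [b [bc [bLo bHi]]].
{ intros y1 y2 _ _ [x1 [h1 l1]] [x2 [h2 l2]].
  apply (proj1 (iso _ _ h1 h2)). exact (dco_lt_trans S _ _ _ l1 l2). }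
assert (compat : forall x y, In (x, y) l ->
          (dco_lt a x <-> dco_lt b y) /\ (dco_lt x a <-> dco_lt y b)).
{ intros x y h.
  assert (hy : In y (map snd l)) by (apply in_map_iff; exists (x, y); auto).
  destruct (dco_lt_total S a x) as [ax|[<-|xa]].
  - pose proof (bHi y hy (ex_intro _ x (conj h ax))) as yb.
    split; split; intro hh; try assumption; exfalso;
      [exact (dco_lt_asym S _ _ ax hh)|exact (dco_lt_asym T _ _ yb hh)].
  - exfalso. exact (fresh (ex_intro _ y h)).
  - pose proof (bLo y hy (ex_intro _ x (conj h xa))) as by'.
    split; split; intro hh; try assumption; exfalso;
      [exact (dco_lt_asym S _ _ xa hh)|exact (dco_lt_asym T _ _ by' hh)]. }
exists b. intros p q [<-|hp] [<-|hq].
- split; [|exact (eq_sym bc)]. split; intro hh; exfalso;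
    [exact (dco_lt_irrefl S _ hh)|exact (dco_lt_irrefl T _ hh)].
- destruct q as [x y]. split; [exact (proj1 (compat x y hq))|exact (eq_sym bc)].
- destruct p as [x y]. split; [exact (proj2 (compat x y hp))|exact (proj2 (iso _ _ hp hp))].
- exact (iso p q hp hq).
Qed.

Definition extend_iso (S T : dense_coloured_order) (l : list (S * T)) (a : S) : T :=
  epsilon (inhabits (dco_enum T 0)) (fun b => partial_iso S T ((a, b) :: l)).

Lemma extend_iso_spec (S T : dense_coloured_order) (l : list (S * T)) (a : S) :
  partial_iso S T l -> partial_iso S T ((a, extend_iso S T l a) :: l).
Proof. intros iso. unfold extend_iso. apply epsilon_spec. exact (partial_iso_extend S T l a iso). Qed.

(* Step [n] puts the [n]-th element of [S] into the domain (forth) and then, working on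
   the swapped graph, the [n]-th element of [T] into the range (back). *)
Fixpoint zigzag (S T : dense_coloured_order) (n : nat) : list (S * T) :=
  match n with
  | O => nil
  | Datatypes.S n =>
      let forth := (dco_enum S n, extend_iso S T (zigzag S T n) (dco_enum S n)) :: zigzag S T n in
      swap_pairs ((dco_enum T n, extend_iso T S (swap_pairs forth) (dco_enum T n))
                  :: swap_pairs forth)
  end.

Lemma zigzag_S (S T : dense_coloured_order) (n : nat) :
  exists a b, zigzag S T (Datatypes.S n) =
    (a, dco_enum T n) :: (dco_enum S n, b) :: zigzag S T n.
Proof. do 2 eexists. simpl zigzag. unfold swap_pairs at 1. simpl. rewrite swap_pairsK. reflexivity. Qed.

Lemma zigzag_partial_iso (S T : dense_coloured_order) (n : nat) : partial_iso S T (zigzag S T n).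
Proof.
induction n as [|n IH]; [intros p q []|].
cbn [zigzag]. apply partial_iso_swap, extend_iso_spec, partial_iso_swap, extend_iso_spec, IH.
Qed.

Lemma zigzag_mono (S T : dense_coloured_order) (n m : nat) (p : S * T) :
  (n <= m)%nat -> In p (zigzag S T n) -> In p (zigzag S T m).
Proof.
induction 1 as [|m _ IH]; intros hp; [exact hp|].
destruct (zigzag_S S T m) as [a [b ->]]. right. right. exact (IH hp).
Qed.

Lemma zigzag_dom (S T : dense_coloured_order) (a : S) : exists n b, In (a, b) (zigzag S T n).
Proof.
destruct (dco_enum_surj S a) as [k <-]. destruct (zigzag_S S T k) as [a' [b e]].
exists (Datatypes.S k), b. rewrite e. right. left. reflexivity.
Qed.

Lemma zigzag_rng (S T : dense_coloured_order) (b : T) : exists n a, In (a, b) (zigzag S T n).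
Proof.
destruct (dco_enum_surj T b) as [k <-]. destruct (zigzag_S S T k) as [a [b' e]].
exists (Datatypes.S k), a. rewrite e. left. reflexivity.
Qed.

Lemma zigzag_compat (S T : dense_coloured_order) (n m : nat) (p q : S * T) :
  In p (zigzag S T n) -> In q (zigzag S T m) ->
  (dco_lt (fst p) (fst q) <-> dco_lt (snd p) (snd q)) /\ dco_col (fst p) = dco_col (snd p).
Proof.
intros hp hq. apply (zigzag_partial_iso S T (Nat.max n m)).
- apply (zigzag_mono S T n); [lia|exact hp].
- apply (zigzag_mono S T m); [lia|exact hq].
Qed.

Lemma dco_eq_iff_of_lt_iff (S T : dense_coloured_order) (x x' : S) (y y' : T) :
  (dco_lt x x' <-> dco_lt y y') -> (dco_lt x' x <-> dco_lt y' y) -> (x = x' <-> y = y').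
Proof.
intros h h'. split; intros <-.
- destruct (dco_lt_total T y y') as [l|[e|l]]; [|exact e|]; exfalso.
  + exact (dco_lt_irrefl S x (proj2 h l)).
  + exact (dco_lt_irrefl S x (proj2 h' l)).
- destruct (dco_lt_total S x x') as [l|[e|l]]; [|exact e|]; exfalso.
  + exact (dco_lt_irrefl T y (proj1 h l)).
  + exact (dco_lt_irrefl T y (proj1 h' l)).
Qed.

Lemma zigzag_eq_iff (S T : dense_coloured_order) (n m : nat) (a a' : S) (b b' : T) :
  In (a, b) (zigzag S T n) -> In (a', b') (zigzag S T m) -> (a = a' <-> b = b').
Proof.
intros h h'. apply dco_eq_iff_of_lt_iff;
  [exact (proj1 (zigzag_compat S T n m _ _ h h'))|exact (proj1 (zigzag_compat S T m n _ _ h' h))].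
Qed.

Theorem dense_coloured_order_iso (S T : dense_coloured_order) :
  exists (f : S -> T) (g : T -> S),
    (forall a, g (f a) = a) /\ (forall b, f (g b) = b) /\
    (forall a1 a2, dco_lt a1 a2 <-> dco_lt (f a1) (f a2)) /\ (forall a, dco_col (f a) = dco_col a).
Proof.
set (f := fun a => epsilon (inhabits (dco_enum T 0)) (fun b => exists n, In (a, b) (zigzag S T n))).
set (g := fun b => epsilon (inhabits (dco_enum S 0)) (fun a => exists n, In (a, b) (zigzag S T n))).
assert (hf : forall a, exists n, In (a, f a) (zigzag S T n)).
{ intros a. apply epsilon_spec. destruct (zigzag_dom S T a) as [n [b h]]. exists b, n. exact h. }
assert (hg : forall b, exists n, In (g b, b) (zigzag S T n)).
{ intros b. apply epsilon_spec. destruct (zigzag_rng S T b) as [n [a h]]. exists a, n. exact h. }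
exists f, g. split; [|split; [|split]].
- intros a. destruct (hf a) as [n hn]. destruct (hg (f a)) as [m hm].
  symmetry. apply (zigzag_eq_iff S T n m _ _ _ _ hn hm). reflexivity.
- intros b. destruct (hg b) as [n hn]. destruct (hf (g b)) as [m hm].
  symmetry. apply (zigzag_eq_iff S T n m _ _ _ _ hn hm). reflexivity.
- intros a1 a2. destruct (hf a1) as [n hn]. destruct (hf a2) as [m hm].
  exact (proj1 (zigzag_compat S T n m _ _ hn hm)).
- intros a. destruct (hf a) as [n hn]. exact (eq_sym (proj2 (zigzag_compat S T n n _ _ hn hn))).
Qed.

Lemma p_arc_same_colour {A : Type} (lt : A -> A -> Prop) (P : A -> bool) (a b : A) :
  P a = P b -> (p_arc lt P a b <-> lt a b).
Proof. unfold p_arc. tauto. Qed.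

Lemma p_arc_diff_colour {A : Type} (lt : A -> A -> Prop) (P : A -> bool) (a b : A) :
  P a <> P b -> (p_arc lt P a b <-> lt b a).
Proof. unfold p_arc. tauto. Qed.

Lemma p_arc_transport {A B : Type} (ltA : A -> A -> Prop) (ltB : B -> B -> Prop)
  (PA : A -> bool) (PB : B -> bool) (f : A -> B) :
  (forall a1 a2, ltA a1 a2 <-> ltB (f a1) (f a2)) -> (forall a, PB (f a) = PA a) ->
  forall a1 a2, p_arc ltA PA a1 a2 <-> p_arc ltB PB (f a1) (f a2).
Proof. intros hlt hP a1 a2. unfold p_arc. rewrite hP, hP, <- hlt, <- hlt. tauto. Qed.

Definition Qc_enum (n : nat) : Qc :=
  let (d, r) := Cantor.of_nat n in
  let (p, m) := Cantor.of_nat r in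
  Q2Qc (Qmake (Z.of_nat p - Z.of_nat m) (Pos.of_succ_nat d)).

Lemma Qc_enum_surj (q : Qc) : exists n, Qc_enum n = q.
Proof.
destruct q as [[num den] hq].
exists (Cantor.to_nat (Nat.pred (Pos.to_nat den), Cantor.to_nat (Z.to_nat num, Z.to_nat (- num)))).
unfold Qc_enum. rewrite !Cantor.cancel_of_to.
apply Qc_is_canon. eapply Qeq_trans; [apply Qred_correct|]. unfold Qeq. cbn [Qnum Qden this].
rewrite Znat.Zpos_P_of_succ_nat.
assert (e : Z.of_nat (Nat.pred (Pos.to_nat den)) = (Z.pos den - 1)%Z).
{ pose proof (Pos2Nat.is_pos den). rewrite <- Znat.positive_nat_Z. lia. }
rewrite e. lia.
Qed.

Lemma Qc_lt_plus_1 (x : Qc) : (x < x + 1)%Qc.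
Proof.
unfold Qclt, Qcplus, Q2Qc. cbn [this]. rewrite Qred_correct.
rewrite <- (Qplus_0_r x) at 1. apply Qplus_lt_r. reflexivity.
Qed.

Lemma Qc_lt_minus_1 (x : Qc) : (x - 1 < x)%Qc.
Proof.
unfold Qclt, Qcminus, Qcplus, Q2Qc. cbn [this]. rewrite Qred_correct.
rewrite <- (Qplus_0_r x) at 2. apply Qplus_lt_r. reflexivity.
Qed.

Section RationalsTwoColoured.
Variable P : Qc -> bool.
Hypotheses (dense1 : dense_in_Q P) (dense2 : dense_in_Q (fun q => negb (P q))).

Lemma Q2_dense (c : bool) (x y : Qc) : (x < y)%Qc -> exists z, P z = c /\ (x < z)%Qc /\ (z < y)%Qc.
Proof.
intros xy. destruct c; [exact (dense1 x y xy)|].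
destruct (dense2 x y xy) as [z [Pz hz]]. exists z. split; [exact (proj1 (Bool.negb_true_iff _) Pz)|exact hz].
Qed.

Definition Q2_order : dense_coloured_order.
Proof.
refine (Build_dense_coloured_order Qc Qclt P Qc_enum Qc_enum_surj
          (fun x => Qlt_irrefl x) Qclt_trans _ Q2_dense _ _).
- intros x y. destruct (Qc_dec x y) as [[h|h]|h]; auto.
- intros c x. destruct (Q2_dense c x (x + 1) (Qc_lt_plus_1 x)) as [z [Pz [xz _]]]. eauto.
- intros c x. destruct (Q2_dense c (x - 1) x (Qc_lt_minus_1 x)) as [z [Pz [_ zx]]]. eauto.
Defined.

End RationalsTwoColoured.

Local Open Scope R_scope.

Lemma IZR_mult_PI_irrational (k : Z) (r : Q) : k <> 0%Z -> IZR k * PI <> Q2R r.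
Proof.
intros hk e. apply (PiIrrational.PI_irrational (r / inject_Z k)).
assert (k_neq0 : IZR k <> 0) by (apply not_0_IZR; exact hk).
rewrite Q2R_div.
- rewrite <- e. unfold Q2R. simpl. field. exact k_neq0.
- intro h. apply hk. apply Qeq_eqR in h. unfold Q2R in h. simpl in h.
  apply eq_IZR. lra.
Qed.

Lemma cos_Q2R_neq0 (q : Q) : cos (Q2R q) <> 0.
Proof.
intro h. destruct (cos_eq_0_0 _ h) as [k hk].
apply (IZR_mult_PI_irrational (2 * k + 1) (q + q)); [lia|].
rewrite Q2R_plus, hk, plus_IZR, mult_IZR. lra.
Qed.

Lemma sin_Q2R_eq0 (q : Q) : sin (Q2R q) = 0 -> Q2R q = 0.
Proof.
intro h. destruct (sin_eq_0_0 _ h) as [k hk].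
destruct (Z.eq_dec k 0) as [->|ne]; [rewrite hk; ring|].
exfalso. exact (IZR_mult_PI_irrational k q ne (eq_sym hk)).
Qed.

Lemma exists_Qc_between (u v : R) : u < v -> exists q : Qc, u < Q2R q < v.
Proof.
intro uv.
set (n := up (/ (v - u))). set (m := up (u * IZR n)).
destruct (archimed (/ (v - u))) as [n_gt _]. destruct (archimed (u * IZR n)) as [m_gt m_le].
fold n in n_gt. fold m in m_gt, m_le.
assert (n_pos : 0 < IZR n) by (pose proof (Rinv_0_lt_compat (v - u)); lra).
assert (gap : 1 < (v - u) * IZR n).
{ apply (Rmult_lt_reg_l (/ (v - u))); [apply Rinv_0_lt_compat; lra|].
  rewrite <- Rmult_assoc, Rinv_l by lra. lra. }
exists (Q2Qc (Qmake m (Z.to_pos n))).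
unfold Q2Qc. cbn [this]. rewrite (Qeq_eqR _ _ (Qred_correct _)).
unfold Q2R. cbn [Qnum Qden]. rewrite Z2Pos.id by (apply lt_IZR; exact n_pos).
split; apply (Rmult_lt_reg_r (IZR n)); try exact n_pos; rewrite Rmult_assoc, Rinv_l; lra.
Qed.

Lemma tan_between_atan (u v x : R) : atan u < x < atan v -> u < tan x < v.
Proof.
intros [ux xv]. pose proof (atan_bound u). pose proof (atan_bound v).
rewrite <- (tan_atan u) at 1. rewrite <- (tan_atan v) at 1.
split; apply tan_increasing; lra.
Qed.

Lemma exists_Qc_tan_between (c : bool) (u v : R) : u < v ->
  exists q : Qc, (if c then 0 < cos (Q2R q) else cos (Q2R q) < 0) /\ u < tan (Q2R q) < v.
Proof.
intro uv. pose proof (atan_increasing u v uv).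
pose proof (atan_bound u). pose proof (atan_bound v).
destruct c.
- destruct (exists_Qc_between (atan u) (atan v)) as [q hq]; [lra|].
  exists q. split; [apply cos_gt_0; lra|apply tan_between_atan; exact hq].
- destruct (exists_Qc_between (atan u + PI) (atan v + PI)) as [q hq]; [lra|].
  exists q. replace (Q2R q) with ((Q2R q - PI) + PI) by ring.
  assert (0 < cos (Q2R q - PI)) by (apply cos_gt_0; lra).
  unfold tan. rewrite neg_cos, neg_sin. split; [lra|].
  replace (- sin (Q2R q - PI) / - cos (Q2R q - PI)) with (tan (Q2R q - PI)) by (unfold tan; field; lra).
  apply tan_between_atan. lra.
Qed.

Definition S2_re (v : S2_vertex) : R := Re (proj1_sig v).
Definition S2_im (v : S2_vertex) : R := Im (proj1_sig v).
Definition S2_cross (u v : S2_vertex) : R := S2_re u * S2_im v - S2_im u * S2_re v.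

(* [S2_key] is the tangent of the argument. *)
Definition S2_key (v : S2_vertex) : R := S2_im v / S2_re v.
Definition S2_colour (v : S2_vertex) : bool := if Rlt_dec 0 (S2_re v) then true else false.
Definition S2_lt (u v : S2_vertex) : Prop := S2_key u < S2_key v.

Definition S2_of_Qc (q : Qc) : S2_vertex := exist _ (cexp (Q2R q)) (ex_intro _ q eq_refl).

Lemma S2_vertex_rep (v : S2_vertex) :
  exists q : Qc, S2_re v = cos (Q2R q) /\ S2_im v = sin (Q2R q).
Proof. destruct v as [z [q ->]]. exists q. split; reflexivity. Qed.

Lemma S2_vertex_eq (u v : S2_vertex) : S2_re u = S2_re v -> S2_im u = S2_im v -> u = v.
Proof.
intros hre him. apply eq_sig_hprop; [intros; apply proof_irrelevance|].
destruct u as [[a b] hu], v as [[c d] hv]. unfold S2_re, S2_im in *. simpl in *. congruence.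
Qed.

Lemma S2_re_neq0 (v : S2_vertex) : S2_re v <> 0.
Proof. destruct (S2_vertex_rep v) as [q [-> _]]. apply cos_Q2R_neq0. Qed.

Lemma S2_norm (v : S2_vertex) : S2_re v * S2_re v + S2_im v * S2_im v = 1.
Proof.
destruct (S2_vertex_rep v) as [q [-> ->]].
pose proof (sin2_cos2 (Q2R q)) as h. unfold Rsqr in h. lra.
Qed.

(* Equal keys force [sin (q2 - q1) = 0] for rational [q1], [q2], hence [q1 = q2] since [pi]
   is irrational. *)
Lemma S2_key_inj (u v : S2_vertex) : S2_key u = S2_key v -> u = v.
Proof.
intros e.
destruct (S2_vertex_rep u) as [q1 [re1 im1]]. destruct (S2_vertex_rep v) as [q2 [re2 im2]].
pose proof (S2_re_neq0 u). pose proof (S2_re_neq0 v).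
assert (sin (Q2R (q2 - q1)) = 0) as h.
{ rewrite Q2R_minus, sin_minus, <- re1, <- re2, <- im1, <- im2.
  unfold S2_key in e.
  replace (S2_im v * S2_re u - S2_re v * S2_im u)
    with (S2_re u * S2_re v * (S2_im v / S2_re v - S2_im u / S2_re u)) by (field; auto).
  rewrite e. ring. }
apply sin_Q2R_eq0 in h. rewrite Q2R_minus in h.
apply S2_vertex_eq; [rewrite re1, re2|rewrite im1, im2]; f_equal; lra.
Qed.

Lemma S2_dense (c : bool) (x y : R) : x < y ->
  exists v : S2_vertex, S2_colour v = c /\ x < S2_key v < y.
Proof.
intros xy. destruct (exists_Qc_tan_between c x y xy) as [q [hc hq]].
exists (S2_of_Qc q). split; [|exact hq].
unfold S2_colour, S2_re, S2_of_Qc. simpl.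
destruct (Rlt_dec 0 (cos (Q2R q))), c; auto; lra.
Qed.

Definition S2_order : dense_coloured_order.
Proof.
refine (Build_dense_coloured_order S2_vertex S2_lt S2_colour (fun n => S2_of_Qc (Qc_enum n))
          _ _ _ _ _ _ _); unfold S2_lt.
- intros [z [q ->]]. destruct (Qc_enum_surj q) as [n <-]. exists n.
  apply eq_sig_hprop; [intros; apply proof_irrelevance|reflexivity].
- intros x. apply Rlt_irrefl.
- intros x y z. apply Rlt_trans.
- intros x y. destruct (Rtotal_order (S2_key x) (S2_key y)) as [h|[h|h]]; auto.
  right. left. exact (S2_key_inj x y h).
- intros c x y xy. destruct (S2_dense c _ _ xy) as [z [zc hz]]. exists z. tauto.
- intros c x. destruct (S2_dense c (S2_key x) (S2_key x + 1)) as [z [zc hz]]; [lra|].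
  exists z. split; [exact zc|lra].
- intros c x. destruct (S2_dense c (S2_key x - 1) (S2_key x)) as [z [zc hz]]; [lra|].
  exists z. split; [exact zc|lra].
Defined.

Lemma Rdiv_lt_iff_cross (a b c d : R) : 0 < a * c -> (b / a < d / c <-> 0 < a * d - b * c).
Proof.
intros ac. assert (a <> 0) by (intros ->; lra). assert (c <> 0) by (intros ->; lra).
replace (a * d - b * c) with ((d / c - b / a) * (a * c)) by (field; auto).
split; intros h; nra.
Qed.

Lemma Rdiv_gt_iff_cross (a b c d : R) : a * c < 0 -> (d / c < b / a <-> 0 < a * d - b * c).
Proof.
intros ac. assert (a <> 0) by (intros ->; lra).
replace (b / a) with (- b / - a) by (field; auto).
rewrite Rdiv_lt_iff_cross by lra. split; intros; lra.
Qed.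

Lemma S2_colour_eq_iff (u v : S2_vertex) : S2_colour u = S2_colour v <-> 0 < S2_re u * S2_re v.
Proof.
pose proof (S2_re_neq0 u). pose proof (S2_re_neq0 v).
unfold S2_colour. destruct (Rlt_dec 0 (S2_re u)), (Rlt_dec 0 (S2_re v));
  split; intros h; try discriminate; try reflexivity; nra.
Qed.

Lemma S2_p_arc_cross (u v : S2_vertex) : p_arc S2_lt S2_colour u v <-> 0 < S2_cross u v.
Proof.
unfold S2_cross. destruct (Bool.bool_dec (S2_colour u) (S2_colour v)) as [e|ne].
- rewrite p_arc_same_colour by exact e. apply Rdiv_lt_iff_cross, S2_colour_eq_iff, e.
- rewrite p_arc_diff_colour by exact ne. apply Rdiv_gt_iff_cross.
  rewrite S2_colour_eq_iff in ne.
  pose proof (Rmult_integral_contrapositive_currified _ _ (S2_re_neq0 u) (S2_re_neq0 v)).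
  destruct (Rtotal_order (S2_re u * S2_re v) 0) as [h|[h|h]]; [exact h|contradiction|contradiction].
Qed.

Lemma cexp_of_unit (c s : R) : c * c + s * s = 1 -> 0 < s ->
  exists t, 0 < t < PI /\ cexp t = (c, s).
Proof.
intros norm s_pos. assert (c_bound : -1 <= c <= 1) by nra.
exists (acos c). pose proof (acos_bound c) as [lo hi].
assert (sin_acos_c : sin (acos c) = s).
{ rewrite sin_acos by lra. replace (1 - c²) with (s²) by (unfold Rsqr; lra).
  apply sqrt_Rsqr. lra. }
split; [split|].
- destruct lo as [lo|e]; [exact lo|]. rewrite <- e, sin_0 in sin_acos_c. lra.
- destruct hi as [hi|e]; [exact hi|]. rewrite e, sin_PI in sin_acos_c. lra.
- unfold cexp. rewrite cos_acos, sin_acos_c by lra. reflexivity.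
Qed.

(* [v = u * (conj u * v)], and the imaginary part of [conj u * v] is [S2_cross u v]. *)
Lemma S2_arc_cross (u v : S2_vertex) : S2_arc u v <-> 0 < S2_cross u v.
Proof.
pose proof (S2_norm u) as nu. pose proof (S2_norm v) as nv.
unfold S2_arc, S2_cross, S2_re, S2_im in *.
destruct u as [[a b] hu], v as [[c d] hv]. simpl in *. split.
- intros [t [ht e]]. unfold cexp, Cmult in e. simpl in e. injection e as -> ->.
  replace (a * (a * sin t + b * cos t) - b * (a * cos t - b * sin t))
    with ((a * a + b * b) * sin t) by ring.
  rewrite nu, Rmult_1_l. apply sin_gt_0; lra.
- intros cross_pos.
  destruct (cexp_of_unit (a * c + b * d) (a * d - b * c)) as [t [ht e]]; [nra|exact cross_pos|].
  exists t. split; [exact ht|]. rewrite e. unfold Cmult. simpl.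
  f_equal; [transitivity (c * (a * a + b * b))|transitivity (d * (a * a + b * b))];
    try (rewrite nu; ring); ring.
Qed.

Theorem lemma4 (P : Qc -> bool)
  (dense1 : dense_in_Q P) (dense2 : dense_in_Q (fun q => negb (P q))) :
  tournament_iso (p_arc Qclt P) S2_arc.
Proof.
destruct (dense_coloured_order_iso (Q2_order P dense1 dense2) S2_order)
  as [f [g [gf [fg [f_lt f_col]]]]].
exists f, g. split; [exact gf|]. split; [exact fg|].
intros a1 a2. rewrite S2_arc_cross, <- S2_p_arc_cross.
exact (p_arc_transport _ _ _ _ f f_lt f_col a1 a2).
Qed.
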